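(* Let $d\ge2$ be an integer, $p^*=1-1/d$, and for integers $0\le w\le d-1$ and $p\in(0,1)$ let $$T_1(d,w,p)=\frac{d-w}{\ln\left(\frac{1}{1+p^d-p^w}\right)}.$$ Then for every integer $w$ with $0\le w\le d-1$, $T_1(d,w,p^* )\le T_1(d,d-1,p^* )$. *)

From Stdlib Require Import Reals.
Open Scope R_scope.

Definition T1 (d w : nat) (p : R) : R :=
  (INR d - INR w) / ln (1 / (1 + p ^ d - p ^ w)).

Definition pstar (d : nat) : R := 1 - 1 / INR d.

(** The value [p = 1 - 1/d] plays no role: the inequality holds for every
    [p] in (0,1).  Writing [d = w + k], the two arguments of [ln] are
    [1 - p^w (1 - p^k)] and [1 - c] with [c = p^(d-1) (1 - p)], so the claim is
    [1 - p^w (1 - p^k) <= (1 - c)^k].  Bernoulli's inequality gives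
    [(1 - c)^k >= 1 - k c], and [k p^(k-1) (1 - p) <= 1 - p^k] (compare the
    geometric sum [1 + p + ... + p^(k-1)] with its smallest term) gives
    [k c <= p^w (1 - p^k)]. *)

From Stdlib Require Import Reals Lra Lia Psatz.
Open Scope R_scope.

Lemma pow_le_one (p : R) (n : nat) : 0 <= p <= 1 -> p ^ n <= 1.
Proof.
  intros Hp. rewrite <- (pow1 n). apply pow_incr. lra.
Qed.

Lemma bernoulli_sub (c : R) (k : nat) : c <= 1 -> 1 - INR k * c <= (1 - c) ^ k.
Proof.
  intros Hc. induction k as [|k IH]; [simpl; lra|].
  rewrite S_INR, <- tech_pow_Rmult.
  assert (0 <= INR k * c * c) by (rewrite Rmult_assoc; apply Rmult_le_pos; [apply pos_INR | nra]).
  nra.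
Qed.

Lemma one_sub_pow_succ_ge (p : R) (m : nat) : 0 <= p <= 1 ->
  INR (S m) * p ^ m * (1 - p) <= 1 - p ^ S m.
Proof.
  intros Hp. induction m as [|m IH]; [simpl; lra|].
  assert (Hpm : 0 <= p ^ m) by (apply pow_le; lra).
  assert (Hdrop : 0 <= INR (S m) * p ^ m * (1 - p) * (1 - p))
    by (repeat apply Rmult_le_pos; try apply pos_INR; lra).
  rewrite S_INR. simpl pow in *. nra.
Qed.

Lemma one_sub_gap_le_pow (p : R) (w m : nat) : 0 <= p <= 1 ->
  1 - p ^ w * (1 - p ^ S m) <= (1 - p ^ (w + m) * (1 - p)) ^ S m.
Proof.
  intros Hp.
  set (c := p ^ (w + m) * (1 - p)).
  assert (Hc : c <= 1).
  { unfold c. assert (p ^ (w + m) <= 1) by (apply pow_le_one; lra). nra. }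
  assert (Hkc : INR (S m) * c <= p ^ w * (1 - p ^ S m)).
  { unfold c. rewrite pow_add.
    replace (INR (S m) * (p ^ w * p ^ m * (1 - p)))
      with (p ^ w * (INR (S m) * p ^ m * (1 - p))) by ring.
    apply Rmult_le_compat_l; [apply pow_le; lra | apply one_sub_pow_succ_ge; lra]. }
  pose proof (bernoulli_sub c (S m) Hc). lra.
Qed.

Lemma gap_in_unit (p : R) (w k : nat) : 0 < p < 1 -> (0 < k)%nat ->
  0 < 1 - p ^ w * (1 - p ^ k) < 1.
Proof.
  intros Hp Hk.
  assert (0 < p ^ w) by (apply pow_lt; lra).
  assert (p ^ w <= 1) by (apply pow_le_one; lra).
  assert (0 < p ^ k) by (apply pow_lt; lra).
  assert (p ^ k < 1) by (apply pow_lt_1_compat; [lra | exact Hk]).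
  split; nra.
Qed.

Lemma T1_add (w k : nat) (p : R) : 0 < p < 1 ->
  T1 (w + k) w p = INR k / - ln (1 - p ^ w * (1 - p ^ k)).
Proof.
  intros Hp. unfold T1.
  assert (0 <= p ^ w) by (apply pow_le; lra).
  assert (0 < p ^ k) by (apply pow_lt; lra).
  assert (p ^ w <= 1) by (apply pow_le_one; lra).
  assert (Hpos : 0 < 1 - p ^ w * (1 - p ^ k)) by nra.
  rewrite plus_INR, pow_add.
  replace (1 + p ^ w * p ^ k - p ^ w) with (1 - p ^ w * (1 - p ^ k)) by ring.
  unfold Rdiv at 2. rewrite Rmult_1_l, ln_Rinv by exact Hpos.
  f_equal. ring.
Qed.

Lemma ln_ratio_le (x z : R) (k : nat) : 0 < x < 1 -> 0 < z < 1 -> x <= z ^ k ->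
  INR k / - ln x <= 1 / - ln z.
Proof.
  intros Hx Hz Hxz.
  assert (Hlx : ln x < 0) by (rewrite <- ln_1; apply ln_increasing; lra).
  assert (Hlz : ln z < 0) by (rewrite <- ln_1; apply ln_increasing; lra).
  assert (Hle : ln x <= INR k * ln z).
  { rewrite <- ln_pow by lra.
    destruct (Rle_lt_or_eq_dec _ _ Hxz) as [Hlt | ->]; [left | right].
    - apply ln_increasing; lra.
    - reflexivity. }
  apply (Rmult_le_reg_r ((- ln x) * (- ln z))); [nra|].
  field_simplify; lra.
Qed.

Lemma T1_le_T1_pred (d w : nat) (p : R) : (w < d)%nat -> 0 < p < 1 ->
  T1 d w p <= T1 d (d - 1) p.
Proof.
  intros Hwd Hp.
  remember (d - w - 1)%nat as m eqn:Hm.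
  replace d with (w + S m)%nat by lia.
  replace (w + S m - 1)%nat with (w + m)%nat by lia.
  rewrite T1_add by exact Hp.
  replace (w + S m)%nat with (w + m + 1)%nat by lia.
  rewrite T1_add, INR_1, pow_1 by exact Hp.
  apply ln_ratio_le.
  - apply gap_in_unit; [exact Hp | lia].
  - pose proof (gap_in_unit p (w + m) 1 Hp ltac:(lia)) as H1.
    rewrite pow_1 in H1. exact H1.
  - apply one_sub_gap_le_pow. lra.
Qed.

Lemma pstar_in_unit (d : nat) : (2 <= d)%nat -> 0 < pstar d < 1.
Proof.
  intros Hd. unfold pstar.
  assert (HD : 2 <= INR d) by (apply (le_INR 2); exact Hd).
  assert (0 < 1 / INR d < 1).
  { split; [apply Rdiv_lt_0_compat; lra|].
    apply (Rmult_lt_reg_r (INR d)); [lra|]. field_simplify; lra. }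
  lra.
Qed.

Theorem lemma8 (d w : nat) (hd : (2 <= d)%nat) (hw : (w <= d - 1)%nat) :
  T1 d w (pstar d) <= T1 d (d - 1) (pstar d).
Proof.
  apply T1_le_T1_pred; [lia | exact (pstar_in_unit d hd)].
Qed.
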